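(* Let $\lambda\in[0,\frac{\pi}{2})$ and let $\mathcal{M}=(M_1,M_2,M_3)$ be a measurement scenario with $M_1=\{A_j\}_j$, $M_2=\{B_k\}_k$, $M_3=\{C_0,\dots,C_{n-1}\}$. For $z\in\{0,1\}$ define $r_{jkl}(z):=\pi^{-1}[(A_j+B_k)-\beta(\lambda,C_l+z\pi)]\bmod 2\in[0,2)$ and the system of $\mathbb{Z}_2$-linear equations $\Psi_l(z):=\{a_j\oplus b_k=r_{jkl}(z) : \text{all } j,k \text{ with } r_{jkl}(z)\in\{0,1\}\}$ in the unknowns $a_j,b_k\in\mathbb{Z}_2$. Then $(|B(\lambda)\rangle,\mathcal{M})$ is a paradox if and only if for every $\vec z=(z_0,\dots,z_{n-1})\in\mathbb{Z}_2^n$ the system $\Psi(\vec z):=\bigcup_l\Psi_l(z_l)$ is inconsistent.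
   Context: $\oplus$ is addition mod 2. For $\varphi\in\mathbb{R}$, $E_\varphi=\cos\varphi X+\sin\varphi Y$ is the equatorial measurement, with $+1$ eigenvector $|\varphi\rangle=\frac{1}{\sqrt2}(|0\rangle+e^{i\varphi}|1\rangle)$ and $-1$ eigenvector $|\varphi+\pi\rangle$; outcomes $+1,-1$ relabelled $0,1$; measurements identified with angles. A measurement scenario $\mathcal{M}=(M_1,M_2,M_3)$ consists of finite sets $M_i\subseteq[0,\pi)$ of angles for qubit $i$; contexts are triples in $M_1\times M_2\times M_3$. For a three-qubit state $|\psi\rangle$, the event $(A,B,C)\to(a,b,c)$ is impossible if $(\langle A+a\pi|\otimes\langle B+b\pi|\otimes\langle C+c\pi|)|\psi\rangle=0$. $(|\psi\rangle,\mathcal{M})$ is a paradox if for every assignment $g$ of outcomes in $\{0,1\}$ to all measurements of $M_1,M_2,M_3$ (as disjoint sets) some context $(A,B,C)$ has $(A,B,C)\to(g(A),g(B),g(C))$ impossible. For $\lambda\in[0,\frac{\pi}{2})$, $|v_\lambda\rangle=\cos\frac{\lambda}{2}|0\rangle+\sin\frac{\lambda}{2}|1\rangle$, $|w_\lambda\rangle=\sin\frac{\lambda}{2}|0\rangle+\cos\frac{\lambda}{2}|1\rangle$, and the interpolant state is $|B(\lambda)\rangle=\frac{1}{\sqrt2}(|00\rangle|v_\lambda\rangle+|11\rangle|w_\lambda\rangle)$. Define modulo $2\pi$: $\beta(\lambda,\varphi)=\varphi-2\arctan\left(\frac{\cos\frac{\lambda}{2}\sin\varphi}{\sin\frac{\lambda}{2}+\cos\frac{\lambda}{2}\cos\varphi}\right)$.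 *)

From Stdlib Require Import Reals List.
From Coquelicot Require Import Coquelicot.
Import ListNotations.
Open Scope R_scope.

Definition CC := Complex.C.

Definition expi (phi : R) : CC := (cos phi, sin phi).

Definition b2R (b : bool) : R := if b then 1 else 0.

(* components of |phi> = (|0> + e^{i phi}|1>)/sqrt 2 in the computational basis *)
Definition ket (phi : R) (x : bool) : CC :=
  if x then Cmult (RtoC (/ sqrt 2)) (expi phi) else RtoC (/ sqrt 2).

Definition v_lam (lam : R) (x : bool) : CC :=
  if x then RtoC (sin (lam / 2)) else RtoC (cos (lam / 2)).
Definition w_lam (lam : R) (x : bool) : CC :=
  if x then RtoC (cos (lam / 2)) else RtoC (sin (lam / 2)).

(* |B(lambda)> = (|00>|v_lambda> + |11>|w_lambda>)/sqrt 2, as amplitudes *)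
Definition Bstate (lam : R) (x1 x2 x3 : bool) : CC :=
  match x1, x2 with
  | false, false => Cmult (RtoC (/ sqrt 2)) (v_lam lam x3)
  | true, true => Cmult (RtoC (/ sqrt 2)) (w_lam lam x3)
  | _, _ => RtoC 0
  end.

Definition bools : list bool := [false; true].

(* (<A + a pi| (x) <B + b pi| (x) <C + c pi|) |psi> *)
Definition amplitude (psi : bool -> bool -> bool -> CC)
    (A B C : R) (a b c : bool) : CC :=
  fold_right Cplus (RtoC 0)
    (flat_map (fun x1 => flat_map (fun x2 => map (fun x3 =>
       Cmult (Cmult (Cconj (ket (A + b2R a * PI) x1))
                    (Cmult (Cconj (ket (B + b2R b * PI) x2))
                           (Cconj (ket (C + b2R c * PI) x3))))
             (psi x1 x2 x3)) bools) bools) bools).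

Definition impossible (psi : bool -> bool -> bool -> CC)
    (A B C : R) (a b c : bool) : Prop :=
  amplitude psi A B C a b c = RtoC 0.

(* measurement scenario: finite sets of angles in [0, pi), given as
   duplicate-free lists *)
Definition angle_set (M : list R) : Prop :=
  NoDup M /\ forall x, In x M -> 0 <= x < PI.

(* paradox: every assignment g (to the disjoint sets M1, M2, M3) is refuted
   by some context *)
Definition paradox (psi : bool -> bool -> bool -> CC)
    (M1 M2 M3 : list R) : Prop :=
  forall g1 g2 g3 : R -> bool,
    exists A B C, In A M1 /\ In B M2 /\ In C M3 /\
      impossible psi A B C (g1 A) (g2 B) (g3 C).

(* beta(lambda, phi) = phi - 2 arctan( cos(l/2) sin phi / (sin(l/2) + cos(l/2) cos phi) ),
   modulo 2 pi.  When the denominator vanishes the arctan is taken at +-infinity,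
   i.e. 2 arctan = +-pi = pi (mod 2 pi). *)
Definition beta (lam phi : R) : R :=
  let d := sin (lam / 2) + cos (lam / 2) * cos phi in
  if Req_EM_T d 0 then phi - PI
  else phi - 2 * atan (cos (lam / 2) * sin phi / d).

Definition Rmod2 (x : R) : R := x - 2 * IZR (Int_part (x / 2)).

Definition r_coef (lam A B C : R) (z : bool) : R :=
  Rmod2 (/ PI * ((A + B) - beta lam (C + b2R z * PI))).

Definition solves_Psi (lam : R) (M1 M2 M3 : list R) (zv : nat -> bool)
    (a b : nat -> bool) : Prop :=
  forall j k l, (j < length M1)%nat -> (k < length M2)%nat -> (l < length M3)%nat ->
    let r := r_coef lam (nth j M1 0) (nth k M2 0) (nth l M3 0) (zv l) in
    (r = 0 -> xorb (a j) (b k) = false) /\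
    (r = 1 -> xorb (a j) (b k) = true).

Definition Psi_consistent (lam : R) (M1 M2 M3 : list R) (zv : nat -> bool) : Prop :=
  exists a b : nat -> bool, solves_Psi lam M1 M2 M3 zv a b.

From Stdlib Require Import Reals List Lra Lia Nsatz Classical.
From Coquelicot Require Import Coquelicot.
Open Scope R_scope.

(* Write A' = A + a pi, B' = B + b pi, u = C + c pi, h = (A' + B') / 2 and
   g = u / 2.  The amplitude of an event on |B(lambda)> equals
   (1/2) Q e^(-i(h+g)) with Q = cos(lambda/2) cos(h+g) + sin(lambda/2) cos(h-g),
   so the event is impossible iff Q = 0.  As a function of h, Q is a nonzero
   combination of cos h and sin h (this is where lambda < pi/2 is used, via
   sin(lambda/2) <> cos(lambda/2)), and with beta(lambda, u) = u - 2t it vanishes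
   exactly at h = g - t + pi/2 mod pi, i.e. when r + a + b - 1 is even, i.e. when
   a xor b = r fails for r in {0, 1}.  So impossible events are exactly the
   violated equations of Psi, and an outcome assignment avoiding all impossible
   events is the same thing as a solution of Psi(z) with z read off on M3. *)

Lemma cos_sum_to_product (c s h g : R) :
  c + s * cos (2 * g) + s * cos (2 * h) + c * cos (2 * h + 2 * g) =
  2 * (c * cos (h + g) + s * cos (h - g)) * cos (h + g).
Proof.
  replace (2 * h + 2 * g) with (2 * (h + g)) by ring.
  rewrite !cos_2a, !cos_plus, !sin_plus, !cos_minus.
  pose proof (sin2_cos2 h) as Hh; pose proof (sin2_cos2 g) as Hg.
  unfold Rsqr in *.
  nsatz.
Qed.

Lemma sin_sum_to_product (c s h g : R) :
  s * sin (2 * g) + s * sin (2 * h) + c * sin (2 * h + 2 * g) =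
  2 * (c * cos (h + g) + s * cos (h - g)) * sin (h + g).
Proof.
  replace (2 * h + 2 * g) with (2 * (h + g)) by ring.
  rewrite !sin_2a, !cos_plus, !sin_plus, !cos_minus.
  pose proof (sin2_cos2 h) as Hh; pose proof (sin2_cos2 g) as Hg.
  unfold Rsqr in *.
  nsatz.
Qed.

Lemma cos_sin_comb_eq0_iff (al ga x0 h : R) :
  al * cos x0 + ga * sin x0 = 0 -> al <> 0 \/ ga <> 0 ->
  (al * cos h + ga * sin h = 0 <-> sin (h - x0) = 0).
Proof.
  intros H0 Hn; rewrite sin_minus; split; intro H.
  - assert (E1 : al * (sin h * cos x0 - cos h * sin x0) = 0).
    { replace (al * (sin h * cos x0 - cos h * sin x0)) with
        (sin h * (al * cos x0 + ga * sin x0) - sin x0 * (al * cos h + ga * sin h))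
        by ring.
      rewrite H0, H; ring. }
    assert (E2 : ga * (sin h * cos x0 - cos h * sin x0) = 0).
    { replace (ga * (sin h * cos x0 - cos h * sin x0)) with
        (cos x0 * (al * cos h + ga * sin h) - cos h * (al * cos x0 + ga * sin x0))
        by ring.
      rewrite H0, H; ring. }
    destruct Hn as [Hn | Hn];
      [destruct (Rmult_integral _ _ E1) | destruct (Rmult_integral _ _ E2)]; tauto.
  - assert (E1 : (al * cos h + ga * sin h) * cos x0 = 0).
    { replace ((al * cos h + ga * sin h) * cos x0) with
        (cos h * (al * cos x0 + ga * sin x0) + ga * (sin h * cos x0 - cos h * sin x0))
        by ring.
      rewrite H0, H; ring. }
    assert (E2 : (al * cos h + ga * sin h) * sin x0 = 0).
    { replace ((al * cos h + ga * sin h) * sin x0) with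
        (sin h * (al * cos x0 + ga * sin x0) - al * (sin h * cos x0 - cos h * sin x0))
        by ring.
      rewrite H0, H; ring. }
    destruct (Rmult_integral _ _ E1); auto.
    destruct (Rmult_integral _ _ E2); auto.
    exfalso; apply (cos_sin_0 x0); auto.
Qed.

Lemma sin_half_PI_mul_eq0_iff (x : R) :
  sin (PI / 2 * x) = 0 <-> exists k : Z, x = 2 * IZR k.
Proof.
  pose proof PI_RGT_0 as Hpi.
  split.
  - intro H; destruct (sin_eq_0_0 _ H) as [k Hk]; exists k.
    apply (Rmult_eq_reg_l (PI / 2)); [| lra].
    rewrite Hk; field.
  - intros [k ->]; apply sin_eq_0_1; exists k; field.
Qed.

Lemma Rmod2_eq0_iff (y : R) : Rmod2 y = 0 <-> exists k : Z, y = 2 * IZR k.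
Proof.
  unfold Rmod2; split.
  - intro H; exists (Int_part (y / 2)); lra.
  - intros [k ->].
    rewrite <- (Int_part_spec (2 * IZR k / 2) k); [ring |].
    replace (2 * IZR k / 2) with (IZR k) by field; lra.
Qed.

Lemma Rmod2_eq1_iff (y : R) : Rmod2 y = 1 <-> exists k : Z, y = 2 * IZR k + 1.
Proof.
  unfold Rmod2; split.
  - intro H; exists (Int_part (y / 2)); lra.
  - intros [k ->].
    rewrite <- (Int_part_spec ((2 * IZR k + 1) / 2) k); [ring |].
    replace ((2 * IZR k + 1) / 2) with (IZR k + / 2) by field; lra.
Qed.

(* The equation [s = r] over Z_2 is violated: it is only an equation of Psi
   when [r] is 0 or 1. *)
Definition violates (r : R) (s : bool) : Prop :=
  r = 0 /\ s = true \/ r = 1 /\ s = false.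

Lemma not_violates_iff (r : R) (s : bool) :
  ~ violates r s <-> (r = 0 -> s = false) /\ (r = 1 -> s = true).
Proof.
  unfold violates; destruct s; split; intuition (try discriminate; lra).
Qed.

Lemma even_shift_iff_violates (y : R) (a b : bool) :
  (exists k : Z, y + b2R a + b2R b - 1 = 2 * IZR k) <-> violates (Rmod2 y) (xorb a b).
Proof.
  unfold violates; rewrite Rmod2_eq0_iff, Rmod2_eq1_iff.
  destruct a, b; simpl; split.
  - intros [k Hk]; right; split; auto; exists (k - 1)%Z; rewrite minus_IZR; simpl; lra.
  - intros [[_ H] | [[k Hk] _]]; [discriminate |].
    exists (k + 1)%Z; rewrite plus_IZR; simpl; lra.
  - intros [k Hk]; left; split; auto; exists k; lra.
  - intros [[[k Hk] _] | [_ H]]; [exists k; lra | discriminate].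
  - intros [k Hk]; left; split; auto; exists k; lra.
  - intros [[[k Hk] _] | [_ H]]; [exists k; lra | discriminate].
  - intros [k Hk]; right; split; auto; exists k; lra.
  - intros [[_ H] | [[k Hk] _]]; [discriminate | exists k; lra].
Qed.

(* [t] is the arctan of the definition of [beta], or pi/2 when its argument
   is infinite. *)
Lemma beta_half_angle (lam u : R) :
  exists t, beta lam u = u - 2 * t /\
    sin t * (sin (lam / 2) + cos (lam / 2) * cos u) = cos t * (cos (lam / 2) * sin u).
Proof.
  unfold beta; destruct (Req_EM_T _ 0) as [Hd | Hd].
  - exists (PI / 2); split; [field |].
    rewrite Hd, sin_PI2, cos_PI2; ring.
  - set (y := cos (lam / 2) * sin u / (sin (lam / 2) + cos (lam / 2) * cos u)).
    exists (atan y); split; [ring |].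
    assert (Hcos : cos (atan y) <> 0).
    { rewrite cos_atan; apply Rgt_not_eq, Rdiv_lt_0_compat; [lra |].
      apply sqrt_lt_R0; pose proof (Rle_0_sqr y); lra. }
    assert (Hsin : sin (atan y) = y * cos (atan y)).
    { pose proof (tan_atan y) as T; unfold tan in T.
      rewrite <- T at 2; field; exact Hcos. }
    rewrite Hsin; unfold y; field; exact Hd.
Qed.

Lemma amplitude_Bstate (lam A B C : R) (a b c : bool) :
  let q := / sqrt 2 in
  let A' := A + b2R a * PI in let B' := B + b2R b * PI in
  let u := C + b2R c * PI in
  let cl := cos (lam / 2) in let sl := sin (lam / 2) in
  amplitude (Bstate lam) A B C a b c =
  (q ^ 4 * (cl + sl * cos u + sl * cos (A' + B') + cl * cos (A' + B' + u)),
   q ^ 4 * (- (sl * sin u + sl * sin (A' + B') + cl * sin (A' + B' + u)))).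
Proof.
  intros q A' B' u cl sl.
  unfold amplitude, Bstate, ket, v_lam, w_lam, expi, bools.
  fold q A' B' u cl sl; simpl.
  repeat rewrite ?cos_plus, ?sin_plus.
  unfold Cplus, Cmult, Cconj, RtoC; simpl.
  apply injective_projections; simpl; ring.
Qed.

Lemma impossible_Bstate_iff_half_angles (lam A B C : R) (a b c : bool) :
  let h := (A + b2R a * PI + (B + b2R b * PI)) / 2 in
  let g := (C + b2R c * PI) / 2 in
  impossible (Bstate lam) A B C a b c <->
  cos (lam / 2) * cos (h + g) + sin (lam / 2) * cos (h - g) = 0.
Proof.
  intros h g; unfold impossible; rewrite amplitude_Bstate.
  replace (A + b2R a * PI + (B + b2R b * PI)) with (2 * h) by (unfold h; field).
  replace (C + b2R c * PI) with (2 * g) by (unfold g; field).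
  rewrite cos_sum_to_product.
  replace (sin (lam / 2) * sin (2 * g) + sin (lam / 2) * sin (2 * h)
           + cos (lam / 2) * sin (2 * h + 2 * g))
    with (2 * (cos (lam / 2) * cos (h + g) + sin (lam / 2) * cos (h - g)) * sin (h + g))
    by (symmetry; apply sin_sum_to_product).
  set (Q := cos (lam / 2) * cos (h + g) + sin (lam / 2) * cos (h - g)).
  set (q4 := (/ sqrt 2) ^ 4).
  assert (Hq4 : q4 <> 0).
  { apply pow_nonzero, Rinv_neq_0_compat, Rgt_not_eq, sqrt_lt_R0; lra. }
  unfold RtoC; split; intro H.
  - injection H as H1 H2.
    assert (E1 : Q * cos (h + g) = 0).
    { apply (Rmult_eq_reg_l (2 * q4)); [lra |].
      apply Rmult_integral_contrapositive; split; lra. }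
    assert (E2 : Q * sin (h + g) = 0).
    { apply (Rmult_eq_reg_l (- 2 * q4)); [lra |].
      apply Rmult_integral_contrapositive; split; lra. }
    destruct (Rmult_integral _ _ E1); auto.
    destruct (Rmult_integral _ _ E2); auto.
    exfalso; apply (cos_sin_0 (h + g)); auto.
  - rewrite H; f_equal; ring.
Qed.

Lemma half_angle_form_zero (cl sl g t : R) :
  sin t * (sl + cl * cos (2 * g)) = cos t * (cl * sin (2 * g)) ->
  (cl + sl) * cos g * cos (g - t + PI / 2) + (sl - cl) * sin g * sin (g - t + PI / 2) = 0.
Proof.
  intro H.
  rewrite cos_plus, sin_plus, cos_PI2, sin_PI2, cos_minus, sin_minus.
  rewrite cos_2a, sin_2a in H.
  pose proof (sin2_cos2 g) as Hg; unfold Rsqr in Hg.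
  nsatz.
Qed.

Lemma half_angle_coeffs_nonzero (lam g : R) :
  0 <= lam < PI / 2 ->
  (cos (lam / 2) + sin (lam / 2)) * cos g <> 0 \/
  (sin (lam / 2) - cos (lam / 2)) * sin g <> 0.
Proof.
  intros Hl; pose proof PI_RGT_0 as Hpi.
  assert (Hc : 0 < cos (lam / 2)) by (apply cos_gt_0; lra).
  assert (Hs : 0 <= sin (lam / 2)) by (apply sin_ge_0; lra).
  assert (Hsc : sin (lam / 2) < cos (lam / 2)).
  { rewrite <- sin_shift; apply sin_increasing_1; lra. }
  destruct (Req_dec (cos g) 0) as [Hg | Hg]; [right | left];
    intro Hz; destruct (Rmult_integral _ _ Hz); try lra.
  apply (cos_sin_0 g); auto.
Qed.

Lemma impossible_Bstate_iff (lam A B C : R) (a b c : bool) :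
  0 <= lam < PI / 2 ->
  impossible (Bstate lam) A B C a b c <-> violates (r_coef lam A B C c) (xorb a b).
Proof.
  intros Hl; rewrite impossible_Bstate_iff_half_angles.
  set (h := (A + b2R a * PI + (B + b2R b * PI)) / 2).
  set (g := (C + b2R c * PI) / 2).
  destruct (beta_half_angle lam (C + b2R c * PI)) as [t [Hbeta Ht]].
  unfold r_coef; rewrite Hbeta, <- even_shift_iff_violates.
  replace (C + b2R c * PI) with (2 * g) in Ht |- * by (unfold g; field).
  replace (cos (lam / 2) * cos (h + g) + sin (lam / 2) * cos (h - g)) with
    ((cos (lam / 2) + sin (lam / 2)) * cos g * cos h
     + (sin (lam / 2) - cos (lam / 2)) * sin g * sin h)
    by (rewrite cos_plus, cos_minus; ring).
  rewrite (cos_sin_comb_eq0_iff _ _ (g - t + PI / 2) h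
             (half_angle_form_zero _ _ _ _ Ht) (half_angle_coeffs_nonzero lam g Hl)).
  pose proof PI_RGT_0 as Hpi.
  replace (h - (g - t + PI / 2)) with
    (PI / 2 * (/ PI * (A + B - (2 * g - 2 * t)) + b2R a + b2R b - 1))
    by (unfold h, g; field; lra).
  apply sin_half_PI_mul_eq0_iff.
Qed.

Fixpoint index_of (x : R) (l : list R) : nat :=
  match l with
  | nil => 0%nat
  | y :: l' => if Req_EM_T x y then 0%nat else S (index_of x l')
  end.

Lemma index_of_spec (x : R) (l : list R) :
  In x l -> (index_of x l < length l)%nat /\ nth (index_of x l) l 0 = x.
Proof.
  induction l as [| y l IH]; simpl; [tauto |].
  intros H; destruct (Req_EM_T x y) as [Hxy | Hxy].
  - split; [lia | auto].
  - destruct H as [H | H]; [congruence |].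
    destruct (IH H); split; [lia | auto].
Qed.

Lemma refute_assignments_by_index
    (P : R -> R -> R -> bool -> bool -> bool -> Prop) (M1 M2 M3 : list R) :
  (forall g1 g2 g3 : R -> bool, exists A B C,
      In A M1 /\ In B M2 /\ In C M3 /\ P A B C (g1 A) (g2 B) (g3 C)) <->
  (forall a b c : nat -> bool, exists j k l,
      (j < length M1)%nat /\ (k < length M2)%nat /\ (l < length M3)%nat /\
      P (nth j M1 0) (nth k M2 0) (nth l M3 0) (a j) (b k) (c l)).
Proof.
  split.
  - intros H a b c.
    destruct (H (fun x => a (index_of x M1)) (fun x => b (index_of x M2))
                (fun x => c (index_of x M3))) as (A & B & C & HA & HB & HC & HP).
    destruct (index_of_spec A M1 HA) as [hj ej].
    destruct (index_of_spec B M2 HB) as [hk ek].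
    destruct (index_of_spec C M3 HC) as [hl el].
    exists (index_of A M1), (index_of B M2), (index_of C M3).
    rewrite ej, ek, el; auto.
  - intros H g1 g2 g3.
    destruct (H (fun j => g1 (nth j M1 0)) (fun k => g2 (nth k M2 0))
                (fun l => g3 (nth l M3 0))) as (j & k & l & hj & hk & hl & HP).
    exists (nth j M1 0), (nth k M2 0), (nth l M3 0).
    repeat split; auto; apply nth_In; auto.
Qed.

Lemma solves_Psi_iff (lam : R) (M1 M2 M3 : list R) (zv a b : nat -> bool) :
  0 <= lam < PI / 2 ->
  solves_Psi lam M1 M2 M3 zv a b <->
  (forall j k l, (j < length M1)%nat -> (k < length M2)%nat -> (l < length M3)%nat ->
     ~ impossible (Bstate lam) (nth j M1 0) (nth k M2 0) (nth l M3 0) (a j) (b k) (zv l)).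
Proof.
  intros Hl; unfold solves_Psi.
  split; intros H j k l hj hk hl; specialize (H j k l hj hk hl);
    rewrite impossible_Bstate_iff, not_violates_iff in *; auto.
Qed.

Theorem lemma9 (lam : R) (M1 M2 M3 : list R) :
  0 <= lam < PI / 2 ->
  angle_set M1 -> angle_set M2 -> angle_set M3 ->
  (paradox (Bstate lam) M1 M2 M3 <->
   forall zv : nat -> bool, ~ Psi_consistent lam M1 M2 M3 zv).
Proof.
  (* The angles need not lie in [0, pi) nor be distinct. *)
  intros Hl _ _ _.
  unfold paradox, Psi_consistent; rewrite refute_assignments_by_index.
  split.
  - intros Hp zv [a [b Hs]].
    destruct (Hp a b zv) as (j & k & l & hj & hk & hl & Himp).
    exact (proj1 (solves_Psi_iff lam M1 M2 M3 zv a b Hl) Hs j k l hj hk hl Himp).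
  - intros Hn a b c; apply NNPP; intro Hno.
    apply (Hn c); exists a, b; apply solves_Psi_iff; auto.
    intros j k l hj hk hl Himp; apply Hno; exists j, k, l; auto.
Qed.
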